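(* Let $S$ be a Rauzy scheme for a recurrent infinite word $W$, let $l_{\max}$ be the maximum length of the words written on the edges of $S$, and let $A$ be a finite factor of $W$. If $s$ is a nonextendable path in $S(A)$, then $|A|-2l_{\max}\le|F(s)|\le|A|$.
   Context: For a finite factor $A$ of $W$, $S(A)$ denotes the set of symmetric paths $s$ of $S$ with $F(s)\sqsubseteq A$; a path $s\in S(A)$ is nonextendable if there is no $s'\in S(A)$ with $s\sqsubseteq s'$ and $s'\neq s$. An infinite word is recurrent if every factor occurs infinitely often. $u\sqsubseteq w$: $u$ is a factor of $w$; $u\sqsubseteq_k w$: $u$ occurs in $w$ at least $k$ times. A graph with words is a strongly connected finite directed graph (multiple edges and loops allowed) in which every edge $e$ carries a front word $F(e)$ and a back word $B(e)$, and every vertex either has in-degree $1$ and out-degree $>1$ (distributing vertex) or in-degree $>1$ and out-degree $1$ (collecting vertex). A path is a finite nonempty sequence of edges $v_1\dots v_n$ with each $v_{i+1}$ starting where $v_i$ ends; subpaths and $s_1\sqsubseteq s_2$, $s_1\sqsubseteq_k s_2$ are defined via edge records (words over the alphabet of edges). A path is symmetric if its first edge starts at a collecting vertex and its last edge ends at a distributing vertex. For $s=v_1\dots v_n$, $F(s)$ is the concatenation, in order, of the front words of $v_1$ and of all $v_i$ ($i\ge2$) starting at a distributing vertex; $B(s)$ is the concatenation, in order, of the back words of all $v_i$ ($i\le n-1$) ending at a collecting vertex and of $v_n$. A Rauzy scheme for $W$ is a graph with words such that: (1) it has more than one edge; (2) front words of edges leaving a common distributing vertex have pairwise distinct first letters,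 and back words of edges entering a common collecting vertex have pairwise distinct last letters; (3) $F(s)=B(s)$ for every symmetric path $s$; (4) for symmetric paths $s_1,s_2$ and $k\ge1$, $F(s_1)\sqsubseteq_k F(s_2)$ implies $s_1\sqsubseteq_k s_2$; (5) all words on edges are factors of $W$; (6) every factor of $W$ is a factor of $F(s)$ for some symmetric path $s$; (7) for every edge $e$ there is a factor $u_e$ of $W$ such that every symmetric path $s$ with $u_e\sqsubseteq F(s)$ passes through $e$. *)

From mathcomp Require Import all_boot.
Set Implicit Arguments. Unset Strict Implicit. Unset Printing Implicit Defensive.

Section Words.
Variable T : eqType.

Definition occ (u w : seq T) : nat :=
  count (fun i => take (size u) (drop i w) == u) (iota 0 (size w - size u).+1).

Definition factor_k (k : nat) (u w : seq T) : Prop := k <= occ u w.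
Definition factor (u w : seq T) : Prop := factor_k 1 u w.

Definition occurs_at (W : nat -> T) (u : seq T) (i : nat) : Prop :=
  u = mkseq (fun j => W (i + j)) (size u).
Definition factorW (W : nat -> T) (u : seq T) : Prop := exists i, occurs_at W u i.
Definition recurrent (W : nat -> T) : Prop :=
  forall u, factorW W u -> forall N, exists2 i, N <= i & occurs_at W u i.
End Words.

Record graph_words (T : eqType) := GraphWords {
  gV : finType; gE : finType;
  src : gE -> gV; tgt : gE -> gV;
  Fw : gE -> seq T;
  Bw : gE -> seq T
}.

Section Graph.
Variables (T : eqType) (G : graph_words T).

Definition indeg (v : gV G) := #|[pred e : gE G | tgt e == v]|.
Definition outdeg (v : gV G) := #|[pred e : gE G | src e == v]|.
Definition distributing (v : gV G) := (indeg v == 1) && (1 < outdeg v).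
Definition collecting (v : gV G) := (1 < indeg v) && (outdeg v == 1).

Definition adj : rel (gV G) := fun x y => [exists e, (src e == x) && (tgt e == y)].
Definition strongly_connected := forall x y, connect adj x y.

Definition is_graph_with_words :=
  strongly_connected /\ forall v, distributing v || collecting v.

Definition is_path (p : seq (gE G)) :=
  (p != [::]) && sorted (fun e f => tgt e == src f) p.

Definition symmetric (p : seq (gE G)) :=
  if p is e :: t then [&& is_path p, collecting (src e) & distributing (tgt (last e t))]
  else false.

Definition Fp (p : seq (gE G)) : seq T :=
  if p is e :: t then Fw e ++ flatten [seq Fw f | f <- t & distributing (src f)]
  else [::].

Definition Bp (p : seq (gE G)) : seq T :=
  if p is e :: t then
    flatten [seq Bw f | f <- belast e t & collecting (tgt f)] ++ Bw (last e t)
  else [::].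

Definition first_letter (w : seq T) := ohead w.
Definition last_letter (w : seq T) := ohead (rev w).

Definition rauzy_scheme (W : nat -> T) : Prop :=
  [/\ is_graph_with_words,
      [/\ 
      1 < #|gE G|,
      ((forall e f : gE G, e != f -> src e = src f -> distributing (src e) ->
         first_letter (Fw e) != None /\ first_letter (Fw e) != first_letter (Fw f)) /\
      (forall e f : gE G, e != f -> tgt e = tgt f -> collecting (tgt e) ->
         last_letter (Bw e) != None /\ last_letter (Bw e) != last_letter (Bw f))),
      (* (3) *) (forall s, symmetric s -> Fp s = Bp s) &
     
      (* (4) *) (forall s1 s2 k, symmetric s1 -> symmetric s2 -> 1 <= k ->
                   factor_k k (Fp s1) (Fp s2) -> factor_k k s1 s2)],
      (forall e : gE G, factorW W (Fw e) /\ factorW W (Bw e)),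
      (* (6) *) (forall u, factorW W u -> exists2 s, symmetric s & factor u (Fp s)) &
      (forall e : gE G, exists u, factorW W u /\
                   forall s, symmetric s -> factor u (Fp s) -> e \in s)].

Definition lmax : nat := \max_(e : gE G) maxn (size (Fw e)) (size (Bw e)).

Definition SA (A : seq T) (s : seq (gE G)) := symmetric s /\ factor (Fp s) A.

Definition nonextendable (A : seq T) (s : seq (gE G)) :=
  SA A s /\ ~ exists s', [/\ SA A s', factor s s' & s' <> s].
End Graph.

(* Let S be a Rauzy scheme for W,
   A a factor of W and s a nonextendable path of S(A), so that A = Lp F(s) R.  For the lower bound we show that
   s is extendable as soon as |R| > lmax (or, symmetrically, |Lp| > lmax):
   - by axiom (6), F(s) R is a factor of F(t) for some symmetric path t;
   - by axiom (3), every occurrence of s in t yields an occurrence of F(s) in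
     F(t), distinct occurrences giving distinct ones; by axiom (4) there are no
     others, so the occurrence of F(s) followed by R comes from t = l s r;
   - the edges of r then contribute R to F(t); the first one, e, leaves a
     distributing vertex, and s e extends inside t to a symmetric path s' with
     F(s') = F(s) F(e), where |F(e)| <= lmax < |R|, so s' lies in S(A).
   The left case reduces to the right one in the reversed graph. *)

From Pilot Require Import Defs.
From mathcomp Require Import all_boot zify.
Set Implicit Arguments. Unset Strict Implicit. Unset Printing Implicit Defensive.

Lemma cat_nonempty (X : eqType) (a b : seq X) : b != [::] -> a ++ b != [::].
Proof. by case: a; case: b. Qed.

Section Factors.
Variable T : eqType.
Implicit Types u v w x l r : seq T.

Definition occl u w :=
  [seq i <- iota 0 (size w - size u).+1 | take (size u) (drop i w) == u].

Lemma occE u w : occ u w = size (occl u w).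
Proof. by rewrite /occ /occl size_filter. Qed.

Lemma occl_uniq u w : uniq (occl u w).
Proof. by rewrite filter_uniq // iota_uniq. Qed.

Lemma mem_occl u w q :
  (q \in occl u w) <-> exists l r, w = l ++ u ++ r /\ size l = q.
Proof.
rewrite mem_filter mem_iota add0n ltnS /=; split.
- case/andP=> /eqP Hu Hq.
  exists (take q w), (drop (size u) (drop q w)); split.
  + by rewrite -{1}Hu !cat_take_drop.
  + by rewrite size_takel //; apply: leq_trans Hq (leq_subr _ _).
- case=> l [r [-> <-]].
  by rewrite drop_size_cat // take_size_cat // eqxx /= !size_cat; lia.
Qed.

Lemma factorP u w : factor u w <-> exists l r, w = l ++ u ++ r.
Proof.
rewrite /factor /factor_k occE; split.
- case E: (occl u w) => [|q qs] //= _.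
  have : q \in occl u w by rewrite E mem_head.
  by case/mem_occl=> l [r [Ew _]]; exists l, r.
- case=> l [r Ew].
  have : size l \in occl u w by apply/mem_occl; exists l, r.
  by case: (occl u w).
Qed.

Lemma factor_size u w : factor u w -> size u <= size w.
Proof. by case/factorP=> l [r ->]; rewrite !size_cat; lia. Qed.

Lemma factor_rev u w : factor u w -> factor (rev u) (rev w).
Proof.
case/factorP=> l [r ->]; apply/factorP; exists (rev r), (rev l).
by rewrite !rev_cat catA.
Qed.

(* Mirroring an occurrence at position [q] gives one at [|w| - |u| - q]. *)
Lemma occ_rev_le u w : occ u w <= occ (rev u) (rev w).
Proof.
rewrite !occE -(size_map (fun q => size w - size u - q)).
apply: uniq_leq_size.
- rewrite map_inj_in_uniq ?occl_uniq // => a b.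
  move=> /mem_occl[l1 [r1 [E1 <-]]] /mem_occl[l2 [r2 [E2 <-]]].
  have : size w = size l1 + size u + size r1 by rewrite E1 !size_cat addnA.
  have : size w = size l2 + size u + size r2 by rewrite E2 !size_cat addnA.
  lia.
- move=> _ /mapP[q /mem_occl[l [r [E <-]]] ->].
  apply/mem_occl; exists (rev r), (rev l); split.
  + by rewrite E !rev_cat catA.
  + by rewrite size_rev E !size_cat; lia.
Qed.

Lemma occ_rev u w : occ (rev u) (rev w) = occ u w.
Proof.
apply/eqP; rewrite eqn_leq occ_rev_le andbT.
by rewrite -{2}(revK u) -{2}(revK w) occ_rev_le.
Qed.

Lemma factorW_factor (W : nat -> T) v u : factorW W v -> factor u v -> factorW W u.
Proof.
case=> i Hv /factorP[l [r Ev]]; exists (i + size l).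
apply: (@eq_from_nth _ (W 0)); first by rewrite size_mkseq.
move=> k hk; rewrite nth_mkseq //.
have : nth (W 0) v (size l + k) = W (i + (size l + k)).
  by rewrite Hv nth_mkseq // Ev !size_cat; lia.
by rewrite Ev nth_cat ltnNge leq_addr /= addKn nth_cat hk addnA => ->.
Qed.

Lemma prefix_of_cat u v w x :
  u ++ v = w ++ x -> size u <= size w -> w = u ++ drop (size u) w.
Proof.
move=> E le_uw; rewrite -{1}(cat_take_drop (size u) w); congr (_ ++ _).
by move/(congr1 (take (size u))): E; rewrite take_size_cat // takel_cat.
Qed.

End Factors.

Section PathWords.
Variables (T : eqType) (G : graph_words T).
Implicit Types p q l r s t : seq (gE G).

Definition Fflat p := flatten [seq Fw f | f <- p & distributing (src f)].
Definition Bflat p := flatten [seq Bw f | f <- p & collecting (tgt f)].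

Lemma Fflat_cat p q : Fflat (p ++ q) = Fflat p ++ Fflat q.
Proof. by rewrite /Fflat filter_cat map_cat flatten_cat. Qed.

Lemma Bflat_cat p q : Bflat (p ++ q) = Bflat p ++ Bflat q.
Proof. by rewrite /Bflat filter_cat map_cat flatten_cat. Qed.

Lemma Bflat_rcons p e :
  Bflat (rcons p e) = Bflat p ++ (if collecting (tgt e) then Bw e else [::]).
Proof. by rewrite -cats1 Bflat_cat /Bflat /=; case: ifP; rewrite /= ?cats0. Qed.

Lemma Fp_cat p q : p != [::] -> Fp (p ++ q) = Fp p ++ Fflat q.
Proof. by case: p => //= e p _; rewrite -[flatten _]/(Fflat _) Fflat_cat catA. Qed.

Lemma Bp_rcons p e : Bp (rcons p e) = Bflat p ++ Bw e.
Proof. by case: p => [|f p] //=; rewrite belast_rcons last_rcons. Qed.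

Lemma Bp_cat l p : p != [::] -> Bp (l ++ p) = Bflat l ++ Bp p.
Proof.
case/lastP: p => [|p e] // _.
by rewrite -rcons_cat !Bp_rcons Bflat_cat catA.
Qed.

Lemma symmetricE x p : Defs.symmetric p =
  [&& is_path p, collecting (src (head x p)) & distributing (tgt (last x p))].
Proof. by case: p. Qed.

Lemma symmetric_path p : Defs.symmetric p -> is_path p.
Proof. by case: p => //= e p /and3P[]. Qed.

Lemma is_path_infix l p r : is_path (l ++ p ++ r) -> p != [::] -> is_path p.
Proof.
rewrite /is_path => /andP[_ H] ->.
by case: (cat_sorted2 H) => _ /cat_sorted2[].
Qed.

Lemma junction x p e m :
  is_path (p ++ e :: m) -> p != [::] -> tgt (last x p) = src e.
Proof.
by case: p => // a p /andP[_ /=]; rewrite cat_path => /andP[_ /= /andP[/eqP]].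
Qed.

Lemma symmetric_prefix l s r :
  Defs.symmetric (l ++ s ++ r) -> Defs.symmetric s -> Defs.symmetric (l ++ s).
Proof.
case: s => [|e s] // Ht Hs.
have Hp : is_path (l ++ e :: s).
  apply: (@is_path_infix [::] _ r); last exact: cat_nonempty.
  by rewrite /= -catA; apply: symmetric_path.
move: Ht Hs; rewrite !(symmetricE e) Hp => /and3P[_ Hc _] /and3P[_ _ Hd].
by case: l Hc Hp => [|f l] /= Hc _; rewrite ?last_cat /= Hc Hd.
Qed.

(* Along a path [e :: m], the edges of [m] up to the first edge of [e :: m]
   entering a distributing vertex leave non-distributing vertices, so they add
   nothing to the front word. *)
Lemma Fflat_before_distributing e m :
  sorted (fun e f => tgt e == src f) (e :: m) ->
  Fflat (take (find (fun f => distributing (tgt f)) (e :: m)) m) = [::].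
Proof.
elim: m e => [|f m IH] e //=; case/andP=> /eqP ef Hm.
case: ifP => //= Hde; rewrite /Fflat /= -ef Hde; exact: IH.
Qed.

Lemma distributing_after s e m :
  is_path (s ++ e :: m) -> Defs.symmetric s -> distributing (src e).
Proof.
case: s => [|e0 s] // Hp Hs.
by rewrite -(junction e0 Hp) //; move: Hs; rewrite (symmetricE e0) => /and3P[].
Qed.

Lemma extend_symmetric l s e m :
  Defs.symmetric (l ++ s ++ e :: m) -> Defs.symmetric s ->
  exists r1, Defs.symmetric (s ++ e :: r1) /\ Fp (s ++ e :: r1) = Fp s ++ Fw e.
Proof.
case: s => [|e0 s] // Ht Hs; set s' := e0 :: s in Hs Ht *.
have Hpt := symmetric_path Ht.
have Hpr : is_path (s' ++ e :: m).
  by apply: (@is_path_infix l _ [::]); rewrite ?cats0 ?cat_nonempty.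
have Hde := distributing_after Hpr Hs.
have Hsorted : sorted (fun e f => tgt e == src f) (e :: m).
  by move: Hpr => /andP[_ /cat_sorted2[]].
set j := find (fun f => distributing (tgt f)) (e :: m).
have Hhas : has (fun f => distributing (tgt f)) (e :: m).
  apply/hasP; exists (last e m); first exact: mem_last.
  by move: Ht; rewrite (symmetricE e0) !last_cat /= => /and3P[].
exists (take j m); split.
- rewrite (symmetricE e0) /=.
  have -> : is_path (e0 :: s ++ e :: take j m).
    apply: (@is_path_infix l _ (drop j m)) => //.
    by rewrite /= -catA /= cat_take_drop.
  move: Hs; rewrite (symmetricE e0) => /and3P[_ -> _] /=.
  have Hj : j < size (e :: m) by rewrite -has_find.
  rewrite -[e :: take j m]/(take j.+1 (e :: m)) (take_nth e Hj) last_cat last_rcons.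
  by have := nth_find e Hhas.
- have Hquiet : Fflat (take j m) = [::] by apply: Fflat_before_distributing.
  by rewrite Fp_cat // -cat1s Fflat_cat Hquiet /Fflat /= Hde /= !cats0.
Qed.

Definition extendable (A : seq T) s :=
  exists s', [/\ SA A s', factor s s' & s' <> s].

End PathWords.

(* The consequences of the Rauzy-scheme axioms used in the proof, relative to a
   factor [A] of the word and a bound [L] on the lengths of the edge words.
   Reversing the graph preserves these properties (see [local_scheme_rev]). *)
Record local_scheme (T : eqType) (G : graph_words T) (A : seq T) (L : nat) : Prop :=
  LocalScheme {
    front_nonempty : forall e : gE G, distributing (src e) -> Fw e != [::];
    back_nonempty : forall e : gE G, collecting (tgt e) -> Bw e != [::];
    front_eq_back : forall s : seq (gE G), Defs.symmetric s -> Fp s = Bp s;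
    occ_reflect : forall s t : seq (gE G), Defs.symmetric s -> Defs.symmetric t ->
      occ (Fp s) (Fp t) <= occ s t;
    factor_cover : forall u, factor u A ->
      exists2 t : seq (gE G), Defs.symmetric t & factor u (Fp t);
    front_bound : forall e : gE G, size (Fw e) <= L;
    back_bound : forall e : gE G, size (Bw e) <= L }.

Section Extension.
Variables (T : eqType) (G : graph_words T) (A : seq T) (L : nat).
Hypothesis HS : local_scheme G A L.
Implicit Types l r s t : seq (gE G).

Lemma Fp_occurrence l s r : Defs.symmetric s -> Defs.symmetric (l ++ s ++ r) ->
  Fp (l ++ s ++ r) = Bflat l ++ Fp s ++ Fflat r.
Proof.
move=> Hs Ht; have Hs0 : s != [::] by apply: contraTneq Hs => ->.
rewrite catA Fp_cat ?cat_nonempty // (front_eq_back HS (symmetric_prefix Ht Hs)).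
by rewrite Bp_cat // -(front_eq_back HS Hs) catA.
Qed.

(* The position in [Fp t] of the copy of [Fp s] induced by an occurrence of
   [s] at position [i] in [t]. *)
Definition bpos t i := size (Bflat (take i t)).

Lemma bpos_occurrence s t i : Defs.symmetric s -> Defs.symmetric t ->
  i \in occl s t -> bpos t i \in occl (Fp s) (Fp t).
Proof.
move=> Hs Ht /mem_occl[l [r [Et <-]]].
apply/mem_occl; exists (Bflat l), (Fflat r); split.
- by rewrite Et Fp_occurrence // -Et.
- by rewrite /bpos Et take_size_cat.
Qed.

(* Distinct occurrences of [s] induce distinct copies of [Fp s]: the edge just
   before a later occurrence enters a collecting vertex, whose back word is
   nonempty. *)
Lemma bpos_increasing s t i j : Defs.symmetric s -> Defs.symmetric t ->
  j \in occl s t -> i < j -> bpos t i < bpos t j.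
Proof.
case: s => [|e0 s] // Hs Ht /mem_occl[l [r [Et Hl]]] lt_ij.
have Hti : take i t = take i l by rewrite Et takel_cat // Hl ltnW.
rewrite /bpos Hti Et take_size_cat // -{2}(cat_take_drop i l) Bflat_cat size_cat.
have : drop i l != [::] by rewrite -size_eq0 size_drop Hl subn_eq0 -ltnNge.
case/lastP Edrop: (drop i l) => [|q z] // _.
have Hz : collecting (tgt z).
  have Hp : is_path ((take i l ++ rcons q z) ++ e0 :: s ++ r).
    by rewrite -Edrop cat_take_drop -Et; apply: symmetric_path.
  rewrite -[z in tgt z](last_rcons (last z (take i l)) q) -last_cat (junction z Hp).
    by move: Hs; rewrite (symmetricE e0) => /and3P[].
  by apply: cat_nonempty; case: q {Edrop Hp}.
have := back_nonempty HS Hz; rewrite Bflat_rcons Hz !size_cat -size_eq0; lia.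
Qed.

(* Axiom (4) makes [bpos t] a bijection from the occurrences of [s] in [t] onto
   those of [Fp s] in [Fp t]: every occurrence of [Fp s] comes from one of [s]. *)
Lemma path_occurrence s t q : Defs.symmetric s -> Defs.symmetric t ->
  q \in occl (Fp s) (Fp t) -> exists l r, t = l ++ s ++ r /\ size (Bflat l) = q.
Proof.
move=> Hs Ht Hq.
have Huniq : uniq (map (bpos t) (occl s t)).
  rewrite map_inj_in_uniq ?occl_uniq // => a b Ha Hb Hab.
  case: (ltngtP a b) => // [lt_ab | lt_ba].
  - by have := bpos_increasing Hs Ht Hb lt_ab; rewrite Hab ltnn.
  - by have := bpos_increasing Hs Ht Ha lt_ba; rewrite Hab ltnn.
have Hsub : {subset map (bpos t) (occl s t) <= occl (Fp s) (Fp t)}.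
  by move=> _ /mapP[i Hi ->]; apply: bpos_occurrence.
have Hsize : size (occl (Fp s) (Fp t)) <= size (map (bpos t) (occl s t)).
  by rewrite size_map -!occE (occ_reflect HS).
case: (uniq_min_size Huniq Hsub Hsize) => _ /(_ q); rewrite Hq.
case/mapP=> i /mem_occl[l [r [Et Hl]]] ->; exists l, r; split=> //.
by rewrite /bpos Et -Hl take_size_cat.
Qed.

(* Lengthening on the right: if at least [L] letters of [A] follow an
   occurrence of [Fp s], then [s] extends within S(A) by a path whose front word
   adds just the front word of one edge. *)
Lemma extend_right s Lp R : Defs.symmetric s -> A = Lp ++ Fp s ++ R ->
  L < size R -> extendable A s.
Proof.
move=> Hs EA HR.
have HsR : factor (Fp s ++ R) A by apply/factorP; exists Lp, [::]; rewrite cats0.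
have [t Ht /factorP[L' [R' Et]]] := factor_cover HS HsR.
have [l [r [Etlr HL']]] : exists l r, t = l ++ s ++ r /\ size (Bflat l) = size L'.
  apply: path_occurrence => //.
  by apply/mem_occl; exists L', (R ++ R'); rewrite Et -!catA.
have Hr : Fflat r = R ++ R'.
  move/eqP: Et; rewrite Etlr Fp_occurrence -?Etlr // -catA eqseq_cat // => /andP[_].
  by rewrite eqseq_cat // => /andP[_ /eqP].
case: r Hr Etlr => [|e m] Hr Etlr; first by move: (congr1 size Hr); rewrite size_cat /=; lia.
have Hde : distributing (src e).
  apply: (distributing_after (m := m) _ Hs).
  apply: (is_path_infix (l := l) (r := [::])); last exact: cat_nonempty.
  by rewrite cats0 -Etlr symmetric_path.
rewrite Etlr in Ht; have [r1 [Hs' EFs']] := extend_symmetric Ht Hs.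
have ER : R = Fw e ++ drop (size (Fw e)) R.
  apply: (@prefix_of_cat _ _ (Fflat m) _ R'); first by rewrite -Hr /Fflat /= Hde.
  by apply: leq_trans (front_bound HS e) (ltnW HR).
exists (s ++ e :: r1); split.
- split=> //; apply/factorP; exists Lp, (drop (size (Fw e)) R).
  by rewrite EFs' EA {1}ER -!catA.
- by apply/factorP; exists [::], (e :: r1).
- by move/(congr1 size); rewrite size_cat /=; lia.
Qed.

End Extension.

Section Reversal.
Variables (T : eqType) (G : graph_words T).
Implicit Types s t : seq (gE G).

(* Distributing and collecting vertices swap
   roles, so reversal exchanges the left and right ends of front words. *)
Definition Grev : graph_words T :=
  @GraphWords T (gV G) (gE G) (@tgt T G) (@src T G)
    (fun e => rev (Bw e)) (fun e => rev (Fw e)).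

Lemma distributing_rev (v : gV G) : @distributing T Grev v = collecting v.
Proof. by rewrite /distributing /collecting andbC. Qed.

Lemma collecting_rev (v : gV G) : @collecting T Grev v = distributing v.
Proof. by rewrite /distributing /collecting andbC. Qed.

Lemma is_path_rev s : @is_path T Grev (rev s) = is_path s.
Proof.
rewrite /is_path rev_sorted.
have -> : (rev s != [::]) = (s != [::]) by rewrite -!size_eq0 size_rev.
by case: s => //= e s; apply: eq_path => a b; apply: eq_sym.
Qed.

Lemma symmetric_rev s : @Defs.symmetric T Grev (rev s) = Defs.symmetric s.
Proof.
case: s => [|e s] //.
rewrite (symmetricE e) (@symmetricE _ Grev e) is_path_rev rev_cons last_rcons.
rewrite distributing_rev collecting_rev /=.
case/lastP: s => [|s f] /=; first by rewrite andbC.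
by rewrite rev_rcons last_rcons /= [_ && collecting _]andbC.
Qed.

Lemma Fp_rev s : @Fp T Grev (rev s) = rev (Bp s).
Proof.
case/lastP: s => [|s e] //.
rewrite rev_rcons Bp_rcons rev_cat /=; congr (_ ++ _).
rewrite /Bflat rev_flatten -map_comp -map_rev -filter_rev.
by congr (flatten (map _ _)); apply: eq_filter => f; apply: distributing_rev.
Qed.

Lemma Bp_rev s : @Bp T Grev (rev s) = rev (Fp s).
Proof.
case: s => [|e s] //.
rewrite rev_cons (@Bp_rcons _ Grev) /= rev_cat; congr (_ ++ _).
rewrite /Bflat rev_flatten -map_comp -map_rev -filter_rev.
by congr (flatten (map _ _)); apply: eq_filter => f; apply: collecting_rev.
Qed.

Lemma local_scheme_rev A L : local_scheme G A L -> local_scheme Grev (rev A) L.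
Proof.
case=> Hfne Hbne HFB Hocc Hcov Hfb Hbb; split.
- by move=> e; rewrite /= distributing_rev -size_eq0 size_rev size_eq0; apply: Hbne.
- by move=> e; rewrite /= collecting_rev -size_eq0 size_rev size_eq0; apply: Hfne.
- by move=> s; rewrite -(revK s) symmetric_rev Fp_rev Bp_rev => Hs; rewrite HFB.
- move=> s t; rewrite -(revK s) -(revK t) !symmetric_rev => Hs Ht.
  by rewrite !Fp_rev -!HFB // !occ_rev -[occ s t]occ_rev Hocc.
- move=> u /factor_rev; rewrite revK => /Hcov[t Ht Hu].
  exists (rev t); first by rewrite symmetric_rev.
  by rewrite Fp_rev -HFB // -(revK u); apply: factor_rev.
- by move=> e /=; rewrite size_rev.
- by move=> e /=; rewrite size_rev.
Qed.

(* Lengthening on the left, by lengthening on the right in the reversed graph. *)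
Lemma extend_left A L s Lp R : local_scheme G A L -> Defs.symmetric s ->
  A = Lp ++ Fp s ++ R -> L < size Lp -> extendable A s.
Proof.
move=> HS Hs EA HLp; have HFB := front_eq_back HS.
have EA' : rev A = rev R ++ @Fp T Grev (rev s) ++ rev Lp.
  by rewrite Fp_rev -HFB // EA !rev_cat catA.
have := extend_right (local_scheme_rev HS) _ EA'; rewrite symmetric_rev size_rev.
case/(_ Hs HLp)=> s' [[Hs' Hfac] Hsub Hne]; exists (rev s').
rewrite -(revK s') symmetric_rev in Hs'.
rewrite -(revK s') Fp_rev -HFB // in Hfac.
split; first split=> //.
- by rewrite -(revK A) -(revK (Fp _)); apply: factor_rev.
- by rewrite -(revK s); apply: factor_rev.
- by move=> Es; apply: Hne; rewrite -Es revK.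
Qed.

End Reversal.

Lemma other_element (X : finType) (P : pred X) x :
  1 < #|P| -> exists2 y, y != x & P y.
Proof.
case/card_gt1P=> y [z [Py Pz yz]].
by case: (eqVneq y x) => [Eyx | ?]; [exists z; rewrite // -Eyx eq_sym | exists y].
Qed.

Section FromRauzyScheme.
Variables (T : eqType) (W : nat -> T) (G : graph_words T).
Hypothesis HR : rauzy_scheme G W.

Lemma front_word_nonempty (e : gE G) : distributing (src e) -> Fw e != [::].
Proof.
case: HR => _ [_ [Hfirst _] _ _] _ _ _ Hd; move: (Hd) => /andP[_ /other_element].
case/(_ e)=> f fe /eqP ef; have [] := Hfirst e f _ (esym ef) Hd.
  by rewrite eq_sym.
by case: (Fw e).
Qed.

Lemma back_word_nonempty (e : gE G) : collecting (tgt e) -> Bw e != [::].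
Proof.
case: HR => _ [_ [_ Hlast] _ _] _ _ _ Hc; move: (Hc) => /andP[/other_element + _].
case/(_ e)=> f fe /eqP ef; have [] := Hlast e f _ (esym ef) Hc.
  by rewrite eq_sym.
by rewrite /last_letter -size_eq0 -size_rev size_eq0; case: (rev (Bw e)).
Qed.

Lemma rauzy_local_scheme A : factorW W A -> local_scheme G A (lmax G).
Proof.
case: HR => _ [_ _ HFB Hocc] _ Hcov _ HA; split.
- exact: front_word_nonempty.
- exact: back_word_nonempty.
- exact: HFB.
- move=> s t Hs Ht; case: (posnP (occ (Fp s) (Fp t))) => [-> // | Hpos].
  exact: Hocc s t _ Hs Ht Hpos (leqnn _).
- by move=> u Hu; apply: Hcov; apply: factorW_factor HA Hu.
- by move=> e; apply: leq_trans (leq_maxl _ _) (leq_bigmax e).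
- by move=> e; apply: leq_trans (leq_maxr _ _) (leq_bigmax e).
Qed.

End FromRauzyScheme.

Unset Implicit Arguments. Set Strict Implicit.

(* Lemma 7.2: a nonextendable path of S(A) has a front word of length between
   |A| - 2 lmax and |A|. *)
Theorem lemma7p2 (T : eqType) (W : nat -> T) (G : graph_words T) (A : seq T)
  (s : seq (gE G)) :
  recurrent W -> rauzy_scheme G W -> factorW W A -> nonextendable A s ->
  size A - 2 * lmax G <= size (Fp s) <= size A.
Proof.
move=> _ HR HA [[Hs HsA] Hne]; have HS := rauzy_local_scheme HR HA.
rewrite (factor_size HsA) andbT leqNgt; apply/negP => Hshort.
case/factorP: HsA => Lp [R EA]; have := congr1 size EA; rewrite !size_cat => Hsize.
apply: Hne; case: (ltnP (lmax G) (size R)) => HRlong.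
- exact: (extend_right HS Hs EA HRlong).
- by apply: extend_left HS Hs EA _; lia.
Qed.
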